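(* Consider $\mathrm{USD}_p$ with $p\in[0,1]$, let $c_s>0$ be a constant, and let $\mathbf{x}(t_0)$ be a configuration at time $t_0$ with negative weighted bias $\Delta_{\bar{w}}(t_0) \geq c_s n$. Then, with probability at least $1-n^{-6}$, it holds that $\Delta_{\bar{w}}(t) \geq \Delta_{\bar{w}}(t_0)/2$ for all $t \in [t_0,t_0+\tau]$ for every $\tau \leq \Delta_{\bar{w}}^2(t_0)/(16\ln n)$.
   Context: Population protocol with $n$ agents, each in a state from $\{1,2,\bot\}$ (Opinion 1, Opinion 2, undecided). At each time step a scheduler picks an ordered pair $(i,j)$ of agents uniformly at random, independently of the past; only the initiator $i$ changes state. In $\mathrm{USD}_p$: if the initiator is $2$ and the responder $1$, the initiator becomes $\bot$; if the initiator is $1$ and the responder $2$, the initiator becomes $\bot$ with probability $1-p$ and otherwise stays $1$; if the initiator is $\bot$, it adopts the responder's state; otherwise nothing changes. $x_1(t),x_2(t),u(t)$ are the numbers of agents in states $1,2,\bot$ after $t$ interactions. The negative weighted bias is $\Delta_{\bar{w}}(t) := (1-p)x_2(t) - x_1(t)$. *)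

From HB Require Import structures.
From mathcomp Require Import all_boot all_order all_algebra.
From mathcomp Require Import reals exp.
Set Implicit Arguments. Unset Strict Implicit. Unset Printing Implicit Defensive.
Import Order.TTheory GRing.Theory Num.Theory.
Local Open Scope ring_scope.

Definition state := option bool.
Definition op1 : state := Some true.
Definition op2 : state := Some false.
Definition und : state := None.

Definition config (n : nat) := {ffun 'I_n -> state}.

Definition x1 n (c : config n) : nat := #|[set i | c i == op1]|.
Definition x2 n (c : config n) : nat := #|[set i | c i == op2]|.
Definition xu n (c : config n) : nat := #|[set i | c i == und]|.

Definition wbias (R : realType) (p : R) n (c : config n) : R :=
  (1 - p) * (x2 c)%:R - (x1 c)%:R.

(* New state of the initiator in USD_p, with initiator state si and responder
   state sj. [keep] is the outcome of the biased coin used when the initiator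
   is 1 and the responder is 2: keep = true (probability p) means the
   initiator stays 1, keep = false (probability 1-p) means it becomes bot. *)
Definition usd_new (keep : bool) (si sj : state) : state :=
  match si, sj with
  | Some false, Some true => und
  | Some true, Some false => if keep then op1 else und
  | None, _ => sj
  | _, _ => si
  end.

Definition usd_step n (c : config n) (i j : 'I_n) (keep : bool) : config n :=
  [ffun k => if k == i then usd_new keep (c i) (c j) else c k].

(* The scheduler picks an ordered pair (i,j) of distinct agents uniformly
   at random (n(n-1) pairs), independently of the past; the coin is
   independent with P(keep) = p. *)
Fixpoint stay_prob (R : realType) (p thr : R) (k : nat) n (c : config n) : R :=
  if wbias p c < thr then 0 else
  match k with
  | 0 => 1
  | k'.+1 =>
      ((n * n.-1)%:R)^-1 *
      \sum_(i : 'I_n) \sum_(j : 'I_n | j != i)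
         (p * stay_prob p thr k' (usd_step c i j true)
          + (1 - p) * stay_prob p thr k' (usd_step c i j false))
  end.

(** Shift the bias by the number of decided agents, [W = Δ - a (x1 + x2)],
    with [a = min(c_s, 1) / 4].  Meetings of opposite opinions raise [W] on
    average by [a (2 - p)] (this is what the shift buys), and meetings of an
    undecided initiator raise it by [Δ - a (x1 + x2) >= a n] as long as
    [Δ >= 2 a n].  With [e^y <= 1 + y + 2 y^2] and [λ = a / 4] the second
    order terms stay below these margins, so [exp (λ (thr - W))] is a
    supermartingale while [Δ >= thr >= 2 a n]; since [W <= Δ] it is [>= 1]
    once [Δ < thr].  Induction on the horizon then bounds the probability of
    ever falling below [thr = Δ0 / 2] by [exp (λ (thr - W0)) <= exp (-a^2 n / 4)],
    which is at most [n^-6] for large [n].  This holds for every horizon. *)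
From mathcomp Require Import all_boot all_order all_algebra.
From mathcomp Require Import reals exp sequences.
From mathcomp Require Import ring lra zify.
Set Implicit Arguments. Unset Strict Implicit. Unset Printing Implicit Defensive.
Import Order.TTheory GRing.Theory Num.Theory.
Local Open Scope ring_scope.

Definition nstate n (c : config n) (s : state) : nat := #|[set i | c i == s]|.

Definition indic {R : realType} (s t : state) : R := (s == t)%:R.

Section Counting.
Variables (R : realType) (n : nat) (c : config n).

Lemma nstate_sum s : (nstate c s)%:R = \sum_i @indic R (c i) s.
Proof.
rewrite /nstate -sum1_card natr_sum big_mkcond /=; apply: eq_bigr => i _.
by rewrite inE /indic; case: eqP.
Qed.

Lemma nstate_partition :
  (nstate c op1)%:R + (nstate c op2)%:R + (nstate c und)%:R = n%:R :> R.
Proof.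
rewrite !nstate_sum -!big_split /= -[n in n%:R]card_ord -sum1_card natr_sum.
by apply: eq_bigr => i _; case: (c i) => [[]|]; rewrite /indic /=; ring.
Qed.

Lemma sum_pairs_indic s t (K : R) :
  \sum_i \sum_j (indic (c i) s * indic (c j) t * K)
  = (nstate c s)%:R * (nstate c t)%:R * K.
Proof.
rewrite !nstate_sum big_distrlr mulr_suml; apply: eq_bigr => i _.
by rewrite mulr_suml.
Qed.

Lemma sum1_ord_neq (i : 'I_n) : \sum_(j | j != i) (1 : R) = n%:R - 1.
Proof.
have h : \sum_(j < n) (1 : R) = 1 + \sum_(j | j != i) 1 by rewrite (bigD1 i).
by rewrite sumr_const card_ord in h; lra.
Qed.

Lemma sum_distinct_pairs : \sum_(i < n) \sum_(j | j != i) (1 : R) = (n * n.-1)%:R.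
Proof.
under eq_bigr do rewrite sum1_ord_neq.
rewrite sumr_const card_ord; case: n => [|m] //=.
by rewrite natrM -natr1 addrK -(mulr_natr m%:R m.+1) -natr1 mulrC.
Qed.

End Counting.

Lemma expR_le_quadratic {R : realType} (y : R) :
  y <= 1/2 -> expR y <= 1 + y + 2 * y ^+ 2.
Proof.
move=> y_le.
have ey_gt0 := expR_gt0 y.
have h1 : (1 - y) * expR y <= 1.
  have := ler_wpM2r (ltW ey_gt0) (expR_ge1Dx (- y)).
  by rewrite expRN mulVf ?lt0r_neq0.
have h2 : 0 <= y ^+ 2 * (1 - 2 * y) by apply: mulr_ge0; [exact: sqr_ge0 | lra].
have : (1 - y) * (expR y - (1 + y + 2 * y ^+ 2)) <= 0.
  suff -> : (1 - y) * (expR y - (1 + y + 2 * y ^+ 2)) =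
    (1 - y) * expR y - 1 - y ^+ 2 * (1 - 2 * y) by lra.
  by ring.
rewrite pmulr_rle0; lra.
Qed.

Lemma pow_le_expR {R : realType} (k : nat) (b x : R) :
  0 < b -> (k.+1)`!%:R / b ^+ k.+1 < x -> x ^+ k <= expR (b * x).
Proof.
move=> b_gt0; rewrite ltr_pdivrMr ?exprn_gt0 // => x_large.
have fact_gt0 : (0 : R) < (k.+1)`!%:R by rewrite ltr0n fact_gt0.
have x_gt0 : 0 < x.
  by rewrite -(pmulr_lgt0 _ (exprn_gt0 k.+1 b_gt0)); apply: lt_trans x_large.
apply: le_trans (expR_ge1Dxn k (mulr_ge0 (ltW b_gt0) (ltW x_gt0))).
suff : x ^+ k <= (b * x) ^+ k.+1 / (k.+1)`!%:R by lra.
rewrite ler_pdivlMr // exprMn.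
have -> : b ^+ k.+1 * x ^+ k.+1 = x ^+ k * (x * b ^+ k.+1) by rewrite !exprSr; ring.
by rewrite ler_wpM2l ?exprn_ge0 ?ltW.
Qed.

Section Potential.
Variables (R : realType) (p a : R).

Definition weight (s : state) : R :=
  match s with Some true => - (1 + a) | Some false => (1 - p) - a | None => 0 end.

Definition shifted_bias n (c : config n) : R := \sum_i weight (c i).

Definition exp_potential (thr : R) n (c : config n) : R :=
  expR (a / 4 * (thr - shifted_bias c)).

Lemma shifted_biasE n (c : config n) :
  shifted_bias c = wbias p c - a * ((nstate c op1)%:R + (nstate c op2)%:R).
Proof.
rewrite /wbias /shifted_bias -/(nstate c op1) -/(nstate c op2) !nstate_sum.
rewrite -big_split mulr_sumr mulr_sumr -!sumrB /=; apply: eq_bigr => i _.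
by case: (c i) => [[]|]; rewrite /indic /=; ring.
Qed.

Lemma shifted_bias_le n (c : config n) : 0 <= a -> shifted_bias c <= wbias p c.
Proof.
by move=> a_ge0; rewrite shifted_biasE gerBl mulr_ge0 ?addr_ge0.
Qed.

Lemma shifted_bias_ge n (c : config n) :
  0 <= a -> wbias p c - a * n%:R <= shifted_bias c.
Proof.
move=> a_ge0; rewrite shifted_biasE lerB // ler_wpM2l //.
by rewrite -(nstate_partition R c) lerDl.
Qed.

Lemma shifted_bias_step n (c : config n) i j keep :
  shifted_bias (usd_step c i j keep)
  = shifted_bias c - weight (c i) + weight (usd_new keep (c i) (c j)).
Proof.
rewrite /shifted_bias (bigD1 i) //= [in RHS](bigD1 i) //= ffunE eqxx.
rewrite (eq_bigr (fun k => weight (c k))); first by ring.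
by move=> k /negbTE k_neq_i; rewrite ffunE k_neq_i.
Qed.

(* Expected relative change of [exp_potential] when an agent in state [s]
   interacts with one in state [t]. *)
Definition pair_drift (s t : state) : R :=
  p * expR (a / 4 * (weight s - weight (usd_new true s t)))
  + (1 - p) * expR (a / 4 * (weight s - weight (usd_new false s t))) - 1.

Definition pair_drift_bound (s t : state) : R :=
  let A := a / 4 * (1 + a) in let B := a / 4 * ((1 - p) - a) in
  indic s op2 * indic t op1 * (B + 2 * B ^+ 2)
  + indic s op1 * indic t op2 * ((1 - p) * (- A + 2 * A ^+ 2))
  + indic s und * indic t op1 * (A + 2 * A ^+ 2)
  + indic s und * indic t op2 * (- B + 2 * B ^+ 2).

Lemma pair_drift_diag s : pair_drift s s = 0.
Proof. by case: s => [[]|]; rewrite /pair_drift /= subrr mulr0 expR0; ring. Qed.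

Lemma pair_drift_le
    (p_ge0 : 0 <= p) (p_le1 : p <= 1) (a_gt0 : 0 < a) (a_le : a <= 1/4) s t :
  pair_drift s t <= pair_drift_bound s t.
Proof.
have avg E : p * E + (1 - p) * E - 1 = E - 1 by ring.
case: s => [[]|]; case: t => [[]|];
  rewrite /pair_drift /pair_drift_bound /indic /= ?subrr ?mulr0 ?expR0;
  rewrite ?mul0r ?mul1r ?mulr1 ?addr0 ?add0r ?subr0 ?sub0r ?opprK ?avg;
  try lra.
- have q_ge0 : 0 <= 1 - p by lra.
  have := expR_le_quadratic (y := a / 4 * - (1 + a)) ltac:(nra).
  by move=> /(ler_wpM2l q_ge0); nra.
- by have := expR_le_quadratic (y := a / 4 * (1 - p - a)) ltac:(nra); lra.
- by have := expR_le_quadratic (y := a / 4 * (1 + a)) ltac:(nra); lra.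
- have := expR_le_quadratic (y := a / 4 * - (1 - p - a)) ltac:(nra).
  by rewrite mulrN sqrrN; lra.
Qed.

Lemma drift_polynomial_le0
    (p_ge0 : 0 <= p) (p_le1 : p <= 1) (a_gt0 : 0 < a) (a_le : a <= 1/4)
    (X1 X2 Xu A B : R) :
  0 <= X1 -> 0 <= X2 -> 0 <= Xu -> 2 * a * (X1 + X2 + Xu) <= (1 - p) * X2 - X1 ->
  A = a / 4 * (1 + a) -> B = a / 4 * ((1 - p) - a) ->
  X2 * X1 * (B + 2 * B ^+ 2) + X1 * X2 * ((1 - p) * (- A + 2 * A ^+ 2))
  + Xu * X1 * (A + 2 * A ^+ 2) + Xu * X2 * (- B + 2 * B ^+ 2) <= 0.
Proof.
move=> X1_ge0 X2_ge0 Xu_ge0 bias_large hA hB.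
set lam := a / 4 in hA hB; have lam_def : lam = a / 4 by []; clearbody lam.
have lam_gt0 : 0 < lam by rewrite lam_def; lra.
have B2_le : B ^+ 2 <= A ^+ 2.
  rewrite hA hB !exprMn ler_wpM2l ?sqr_ge0 //.
  have : 0 <= (1 + 2 * a - (1 - p)) * (1 + (1 - p)) by apply: mulr_ge0; lra.
  nra.
(* second-order terms are absorbed by the first-order margin [lam * a] *)
have A2_le : 2 * A ^+ 2 <= lam * a.
  have : 0 <= a ^+ 2 * (2 - (1 + a) ^+ 2) by apply: mulr_ge0; [exact: sqr_ge0 | nra].
  have -> : lam * a = 2 * A ^+ 2 + a ^+ 2 * (2 - (1 + a) ^+ 2) / 8.
    by rewrite hA lam_def; field.
  lra.
have opposite_le0 : B + 2 * B ^+ 2 + (1 - p) * (- A + 2 * A ^+ 2) <= 0.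
  have first_order : B - (1 - p) * A = - lam * a * (1 + (1 - p)) by rewrite hA hB; ring.
  have : (1 - p) * (2 * A ^+ 2) <= (1 - p) * (lam * a) by rewrite ler_wpM2l //; lra.
  nra.
have undecided_le0 : X1 * (A + 2 * A ^+ 2) + X2 * (- B + 2 * B ^+ 2) <= 0.
  have first_order : X1 * A - X2 * B = lam * (- ((1 - p) * X2 - X1) + a * (X1 + X2)).
    by rewrite hA hB; ring.
  have X1_term : X1 * (2 * A ^+ 2) <= X1 * (lam * a) by rewrite ler_wpM2l.
  have X2_term : X2 * (2 * B ^+ 2) <= X2 * (lam * a) by rewrite ler_wpM2l //; lra.
  have : lam * (- ((1 - p) * X2 - X1) + 2 * a * (X1 + X2)) <= 0.
    by rewrite pmulr_rle0 //; nra.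
  nra.
have := mulr_ge0_le0 (mulr_ge0 X2_ge0 X1_ge0) opposite_le0.
have := mulr_ge0_le0 Xu_ge0 undecided_le0.
set u := _ + _ + _ + _.
suff -> : u = X2 * X1 * (B + 2 * B ^+ 2 + (1 - p) * (- A + 2 * A ^+ 2))
  + Xu * (X1 * (A + 2 * A ^+ 2) + X2 * (- B + 2 * B ^+ 2)) by lra.
by rewrite /u; ring.
Qed.

Lemma sum_pair_drift_le0
    (p_ge0 : 0 <= p) (p_le1 : p <= 1) (a_gt0 : 0 < a) (a_le : a <= 1/4) n (c : config n) :
  2 * a * n%:R <= wbias p c ->
  \sum_i \sum_(j | j != i) pair_drift (c i) (c j) <= 0.
Proof.
rewrite -(nstate_partition R c) => bias_large.
have -> : \sum_i \sum_(j | j != i) pair_drift (c i) (c j)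
        = \sum_i \sum_j pair_drift (c i) (c j).
  by apply: eq_bigr => i _; rewrite [in RHS](bigD1 i) //= pair_drift_diag add0r.
apply: le_trans (_ : \sum_i \sum_j pair_drift_bound (c i) (c j) <= 0).
  by apply: ler_sum => i _; apply: ler_sum => j _; apply: pair_drift_le.
rewrite /pair_drift_bound; under eq_bigr do rewrite !big_split /=.
rewrite !big_split /= !sum_pairs_indic.
by apply: drift_polynomial_le0; rewrite ?ler0n.
Qed.

Lemma exp_potential_step thr n (c : config n) i j :
  p * exp_potential thr (usd_step c i j true)
  + (1 - p) * exp_potential thr (usd_step c i j false)
  = exp_potential thr c * (pair_drift (c i) (c j) + 1).
Proof.
rewrite /exp_potential !shifted_bias_step /pair_drift.
have split x y : a / 4 * (thr - (shifted_bias c - x + y)) =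
  a / 4 * (thr - shifted_bias c) + a / 4 * (x - y) by ring.
by rewrite !split !expRD; ring.
Qed.

Lemma exp_potential_supermartingale
    (p_ge0 : 0 <= p) (p_le1 : p <= 1) (a_gt0 : 0 < a) (a_le : a <= 1/4)
    thr n (c : config n) :
  2 * a * n%:R <= wbias p c ->
  \sum_i \sum_(j | j != i)
     (p * exp_potential thr (usd_step c i j true)
      + (1 - p) * exp_potential thr (usd_step c i j false))
  <= (n * n.-1)%:R * exp_potential thr c.
Proof.
move=> bias_large; set F := exp_potential thr c.
under eq_bigr do under eq_bigr do rewrite exp_potential_step -/F.
have -> : \sum_i \sum_(j | j != i) F * (pair_drift (c i) (c j) + 1)
  = F * \sum_i \sum_(j | j != i) pair_drift (c i) (c j) + (n * n.-1)%:R * F.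
  rewrite -sum_distinct_pairs mulr_sumr mulr_suml -big_split; apply: eq_bigr => i _.
  by rewrite mulr_sumr mulr_suml -big_split; apply: eq_bigr => j _ /=; ring.
by rewrite gerDr mulr_ge0_le0 ?expR_ge0 ?sum_pair_drift_le0.
Qed.

Lemma exp_potential_ge1 thr n (c : config n) :
  0 <= a -> wbias p c < thr -> 1 <= exp_potential thr c.
Proof.
move=> a_ge0 bias_lt; rewrite /exp_potential -[leLHS]expR0 ler_expR.
apply: mulr_ge0; first lra.
by have := shifted_bias_le c a_ge0; lra.
Qed.

Lemma stay_prob_ge
    (p_ge0 : 0 <= p) (p_le1 : p <= 1) (a_gt0 : 0 < a) (a_le : a <= 1/4)
    thr k n (c : config n) :
  (1 < n)%N -> 2 * a * n%:R <= thr ->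
  1 - exp_potential thr c <= stay_prob p thr k c.
Proof.
move=> n_gt1 thr_large.
elim: k c => [|k IH] c /=; case: ifP => [bias_lt|bias_ge].
- by rewrite subr_le0 exp_potential_ge1 ?ltW.
- by rewrite gerBl expR_ge0.
- by rewrite subr_le0 exp_potential_ge1 ?ltW.
move: bias_ge => /negbT; rewrite -leNgt => bias_ge.
have N_gt0 : 0 < (n * n.-1)%:R :> R by rewrite ltr0n; nia.
rewrite ler_pdivlMl // mulrBr mulr1.
apply: le_trans (_ : \sum_i \sum_(j | j != i)
   (p * (1 - exp_potential thr (usd_step c i j true))
    + (1 - p) * (1 - exp_potential thr (usd_step c i j false))) <= _); last first.
  apply: ler_sum => i _; apply: ler_sum => j _.
  by apply: lerD; apply: ler_wpM2l; rewrite ?subr_ge0.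
have avg x y : p * (1 - x) + (1 - p) * (1 - y) = 1 - (p * x + (1 - p) * y) by ring.
under [leRHS]eq_bigr do rewrite (eq_bigr _ (fun j _ => avg _ _)) sumrB.
rewrite sumrB sum_distinct_pairs lerB //.
exact: exp_potential_supermartingale (le_trans thr_large bias_ge).
Qed.

Lemma exp_potential_half_bias n (c : config n) :
  0 <= a -> 4 * a * n%:R <= wbias p c ->
  exp_potential (wbias p c / 2) c <= expR (- (a ^+ 2 / 4 * n%:R)).
Proof.
move=> a_ge0 bias_large; rewrite /exp_potential ler_expR.
by have := shifted_bias_ge c a_ge0; have := ler0n R n; nra.
Qed.

End Potential.

Theorem lemma13 (R : realType) (p c_s : R) :
  0 <= p <= 1 -> 0 < c_s ->
  exists n0 : nat, forall (n : nat) (c : config n) (tau : nat),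
    (n0 <= n)%N ->
    c_s * n%:R <= wbias p c ->
    tau%:R <= (wbias p c) ^+ 2 / (16 * ln (n%:R : R)) ->
    1 - ((n%:R : R) ^+ 6)^-1 <= stay_prob p (wbias p c / 2) tau c.
Proof.
move=> /andP[p_ge0 p_le1] c_s_gt0.
pose m := Num.min c_s 1.
have m_gt0 : 0 < m by rewrite lt_min c_s_gt0 ltr01.
have m_le1 : m <= 1 by rewrite ge_min lexx orbT.
have m_le_c_s : m <= c_s by rewrite ge_min lexx.
pose a := m / 4.
have a_gt0 : 0 < a by rewrite /a; lra.
have a_le : a <= 1/4 by rewrite /a; lra.
pose b := a ^+ 2 / 4; have b_gt0 : 0 < b by rewrite divr_gt0 ?exprn_gt0.
exists (maxn 2 (Num.Def.archi_bound ((7`!)%:R / b ^+ 7))).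
move=> n c tau; rewrite geq_max => /andP[n_gt1 n_large] bias_large _.
have a4n : 4 * a * n%:R <= wbias p c.
  by apply: le_trans bias_large; apply: ler_wpM2r; rewrite ?ler0n // /a; lra.
have n6_gt0 : (0 : R) < n%:R ^+ 6 by rewrite exprn_gt0 // ltr0n; lia.
have thr_large : 2 * a * n%:R <= wbias p c / 2 by lra.
apply: le_trans (stay_prob_ge p_ge0 p_le1 a_gt0 a_le tau c n_gt1 thr_large).
rewrite lerB //; apply: le_trans (exp_potential_half_bias (ltW a_gt0) a4n) _.
rewrite expRN lef_pV2 ?posrE ?expR_gt0 //; apply: (pow_le_expR b_gt0).
apply: lt_le_trans (archi_boundP _) _; last by rewrite ler_nat.
by rewrite divr_ge0 // exprn_ge0 // ltW.
Qed.
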